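(* Let $n\ge1$ and $s\in D^n$. Then $\sum_{i=1}^{n}L_i\le\sum_{i=1}^{n}\left\lfloor\frac{i+1}{2}\right\rfloor$.
   Context: Let $D$ be a commutative integral domain with $1\neq 0$. For $s=(s_1,\dots,s_n)\in D^n$, a polynomial $f\in D[x]$ annihilates $s$ if $f=0$, or $d=\deg f\ge0$ and $\sum_{k=0}^{d}f_ks_{j-d+k}=0$ for all $d+1\le j\le n$. The linear complexity $L(s)$ is the least degree of a nonzero annihilator of $s$, and $L_i=L(s_1,\dots,s_i)$. *)

From mathcomp Require Import all_boot all_order all_algebra.
From Stdlib Require Import ClassicalEpsilon.
Set Implicit Arguments. Unset Strict Implicit. Unset Printing Implicit Defensive.
Import GRing.Theory.
Local Open Scope ring_scope.

(* A sequence s = (s_1,...,s_n) in D^n is a seq D of size n;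
   s_i (1-indexed) is nth 0 s (i-1). *)
Definition sterm (D : idomainType) (s : seq D) (i : nat) : D := nth 0 s i.-1.

Definition annihilates (D : idomainType) (f : {poly D}) (s : seq D) : Prop :=
  f = 0 \/
  (forall j : nat, ((size f).-1 + 1 <= j <= size s)%N ->
     \sum_(k < size f) f`_k * sterm s (j - (size f).-1 + k)%N = 0).

Definition has_annihilator_of_deg (D : idomainType) (s : seq D) (d : nat) : bool :=
  if excluded_middle_informative
       (exists f : {poly D}, [/\ f != 0, (size f).-1 = d & annihilates f s])
  then true else false.

Lemma annihilator_exists (D : idomainType) (s : seq D) :
  exists d : nat, has_annihilator_of_deg s d.
Proof.
exists (size s); rewrite /has_annihilator_of_deg.
case: excluded_middle_informative => // [[]].
exists ('X^(size s)); split.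
- by rewrite monic_neq0 // monicXn.
- by rewrite size_polyXn.
- right=> j; rewrite size_polyXn /= addn1 => /andP [h1 h2].
  by have := leq_trans h1 h2; rewrite ltnn.
Qed.

Definition linear_complexity (D : idomainType) (s : seq D) : nat :=
  ex_minn (annihilator_exists s).

(* Write L_i for the linear complexity of (s_1, ..., s_i).  The sequence L_i
   starts at 0, is nondecreasing, and whenever it jumps, L_i + L_(i+1) <= i+1:
   if L_m < L_(m+1) = L_i is the previous jump, a shifted combination of
   minimal annihilators for the first i and the first m terms (the
   Berlekamp-Massey update) annihilates the first i+1 terms and has degree
   max(L_i, L_m + i - m), and L_m + L_i <= m+1 by induction.  For any such
   sequence g, the potential (g_k - ceil(k/2)) (g_k - floor(k/2) - 1) never
   exceeds the slack sum_(i<=k) floor((i+1)/2) - sum_(i<=k) g_i, and it is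
   nonnegative, being a product of two integers that differ by at most one. *)

From mathcomp Require Import all_boot all_order all_algebra zify.
From Stdlib Require Import ClassicalEpsilon.
Set Implicit Arguments. Unset Strict Implicit. Unset Printing Implicit Defensive.
Import GRing.Theory Num.Theory.

Section HalfBound.
Variables (g : nat -> nat) (n : nat).
Hypothesis g0 : g 0 = 0.
Hypothesis g_mono : forall k, k < n -> g k <= g k.+1.
Hypothesis g_jump : forall k, k < n -> g k < g k.+1 -> g k + g k.+1 <= k.+1.

Lemma sum_half_potential k : k <= n ->
  (((g k)%:Z - (uphalf k)%:Z) * ((g k)%:Z - (k./2)%:Z - 1)
     + (\sum_(1 <= i < k.+1) g i)%:Z <= (\sum_(1 <= i < k.+1) i.+1./2)%:Z)%R.
Proof.
elim: k => [_|k IHk lt_kn]; first by rewrite !big_geq // g0.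
have := IHk (ltnW lt_kn); rewrite [X in _ -> X]/= !(big_nat_recr _ _ _ (ltn0Sn k)) /=.
have := g_mono lt_kn; have := @g_jump _ lt_kn.
move: (g k) (g k.+1) (\sum_(1 <= i < k.+1) g i) (\sum_(1 <= i < k.+1) i.+1./2).
move=> a b Sg Sc jump mono pot.
have split_k : uphalf k + k./2 = k by lia.
have : (0 <= (b%:Z - a%:Z) * (k%:Z + 1 - a%:Z - b%:Z))%R.
  case: (ltnP a b) => [/jump ? | ?]; first by apply: mulr_ge0; lia.
  have -> : b = a by lia.
  by rewrite subrr mul0r.
nia.
Qed.

Lemma sum_le_sum_half :
  \sum_(1 <= i < n.+1) g i <= \sum_(1 <= i < n.+1) i.+1./2.
Proof.
have := sum_half_potential (leqnn n).
move: (g n) (\sum_(1 <= i < n.+1) g i) (\sum_(1 <= i < n.+1) i.+1./2) => a Sg Sc.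
have : (0 <= (a%:Z - (uphalf n)%:Z) * (a%:Z - (n./2)%:Z - 1))%R.
  by case: (ltnP (n./2) a); nia.
nia.
Qed.
End HalfBound.

Local Open Scope ring_scope.

Lemma last_increase (g : nat -> nat) (i : nat) :
  (forall k, (k < i)%N -> (g k <= g k.+1)%N) -> (g 0 < g i)%N ->
  exists2 m, (m < i)%N & (g m < g m.+1)%N /\ g m.+1 = g i.
Proof.
elim: i => [|i IH] g_mono; first by rewrite ltnn.
have [lt_i _ | ge_i lt_0i] := ltnP (g i) (g i.+1); first by exists i.
have eq_i : g i = g i.+1 by apply/eqP; rewrite eqn_leq ge_i g_mono.
have [|m lt_mi [jump_m eq_m]] := IH (fun k lt_ki => g_mono k (ltnW lt_ki)).
  by rewrite eq_i.
by exists m; [exact: ltnW | split; rewrite -?eq_i].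
Qed.

Section LinearComplexity.
Variable D : idomainType.
Implicit Types (s t : seq D) (f g : {poly D}).

Lemma linear_complexity_spec t :
  exists2 f : {poly D}, f != 0 & (size f).-1 = linear_complexity t /\ annihilates f t.
Proof.
rewrite /linear_complexity; case: ex_minnP => m + _.
rewrite /has_annihilator_of_deg; case: excluded_middle_informative => // -[f [? ? ?]] _.
by exists f.
Qed.

Lemma linear_complexity_min t f :
  f != 0 -> annihilates f t -> (linear_complexity t <= (size f).-1)%N.
Proof.
move=> f_neq0 f_ann; rewrite /linear_complexity; case: ex_minnP => m _; apply.
rewrite /has_annihilator_of_deg; case: excluded_middle_informative => // -[].
by exists f.
Qed.

Lemma linear_complexity_le_size t : (linear_complexity t <= size t)%N.
Proof.
have := @linear_complexity_min t 'X^(size t); rewrite size_polyXn /=; apply.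
  by rewrite monic_neq0 ?monicXn.
by right=> j; rewrite size_polyXn addn1 /= => /andP[/leq_trans le_j /le_j]; rewrite ltnn.
Qed.

Definition window s f (r : nat) : D := \sum_(k < size f) f`_k * sterm s (r + k).

Lemma windowE s f r (N : nat) : (size f <= N)%N ->
  window s f r = \sum_(k < N) f`_k * sterm s (r + k).
Proof.
move=> le_fN; rewrite /window -(subnKC le_fN) big_split_ord /=.
by rewrite [X in _ + X]big1 ?addr0 // => k _; rewrite nth_default ?mul0r ?leq_addr.
Qed.

Lemma window_mulXn s f r (c : nat) : window s (f * 'X^c) r = window s f (r + c).
Proof.
have [-> | f_neq0] := eqVneq f 0; first by rewrite mul0r /window size_poly0 !big_ord0.
rewrite /window size_mulXn // big_split_ord /= big1 ?add0r => [|k _]; last first.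
  by rewrite coefMXn ltn_ord mul0r.
by apply: eq_bigr => k _; rewrite coefMXn ltnNge leq_addr /= addKn addnA.
Qed.

Lemma window_lin s f g r (a b : D) :
  window s (a *: f - b *: g) r = a * window s f r - b * window s g r.
Proof.
pose N := maxn (size f) (size g).
have le_fN : (size f <= N)%N by rewrite leq_maxl.
have le_gN : (size g <= N)%N by rewrite leq_maxr.
have le_hN : (size (a *: f - b *: g)%R <= N)%N.
  rewrite (leq_trans (size_polyD _ _)) // geq_max size_polyN.
  by rewrite !(leq_trans (size_scale_leq _ _)).
rewrite !(windowE _ _ le_fN, windowE _ _ le_gN, windowE _ _ le_hN).
rewrite !mulr_sumr -sumrB; apply: eq_bigr => k _.
by rewrite coefB !coefZ mulrBl !mulrA.
Qed.

Lemma annihilates_takeE s f (i : nat) : f != 0 -> (i <= size s)%N ->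
  annihilates f (take i s) <->
  (forall j, ((size f).-1 < j <= i)%N -> window s f (j - (size f).-1) = 0).
Proof.
move=> f_neq0 le_is; rewrite /annihilates size_takel //.
have window_take j : ((size f).-1 < j <= i)%N ->
    \sum_(k < size f) f`_k * sterm (take i s) (j - (size f).-1 + k)
    = window s f (j - (size f).-1).
  move=> /andP[lt_dj le_ji]; apply: eq_bigr => k _; congr (_ * _).
  have le_kd : (k <= (size f).-1)%N by rewrite -ltnS prednK ?size_poly_gt0.
  by rewrite /sterm nth_take //; lia.
split=> [[/eqP f_eq0 | f_ann] j lt_j | f_ann]; first by rewrite f_eq0 in f_neq0.
  by rewrite -window_take // f_ann ?addn1.
by right=> j; rewrite addn1 => lt_j; rewrite window_take // f_ann.
Qed.

Lemma annihilates_take_le s f (i j : nat) : (i <= j <= size s)%N ->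
  annihilates f (take j s) -> annihilates f (take i s).
Proof.
have [-> _ _ | f_neq0 /andP[le_ij le_js]] := eqVneq f 0; first by left.
move=> /annihilates_takeE-/(_ f_neq0 le_js) f_ann.
apply/annihilates_takeE => // [|k /andP[lt_k le_ki]]; first exact: leq_trans le_js.
by rewrite f_ann // lt_k (leq_trans le_ki).
Qed.

Lemma annihilates_take_succ s f (i : nat) : (i < size s)%N ->
  annihilates f (take i s) -> window s f (i.+1 - (size f).-1) = 0 ->
  annihilates f (take i.+1 s).
Proof.
have [-> _ _ _ | f_neq0 lt_is] := eqVneq f 0; first by left.
move=> /annihilates_takeE-/(_ f_neq0 (ltnW lt_is)) f_ann f_last.
apply/annihilates_takeE => // j /andP[lt_j]; rewrite leq_eqVlt => /predU1P[-> //|lt_ji].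
by rewrite f_ann // lt_j.
Qed.

Lemma linear_complexity_take0 s : linear_complexity (take 0 s) = 0%N.
Proof. by apply/eqP; rewrite -leqn0 take0 (linear_complexity_le_size [::]). Qed.

Lemma linear_complexity_take_mono s (i : nat) : (i < size s)%N ->
  (linear_complexity (take i s) <= linear_complexity (take i.+1 s))%N.
Proof.
move=> lt_is; have [f f_neq0 [<- f_ann]] := linear_complexity_spec (take i.+1 s).
apply: linear_complexity_min (annihilates_take_le _ f_ann) => //.
by rewrite leqnSn.
Qed.

Lemma window_neq0_of_jump s f (i : nat) : (i < size s)%N -> f != 0 ->
  annihilates f (take i s) -> (size f).-1 = linear_complexity (take i s) ->
  (linear_complexity (take i s) < linear_complexity (take i.+1 s))%N ->
  window s f (i.+1 - (size f).-1) != 0.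
Proof.
move=> lt_is f_neq0 f_ann deg_f jump; apply/eqP => f_last.
have := linear_complexity_min f_neq0 (annihilates_take_succ lt_is f_ann f_last).
by rewrite deg_f leqNgt jump.
Qed.

Lemma linear_complexity_take_succ_le s f g (m i : nat) : (m < i < size s)%N ->
  f != 0 -> g != 0 -> annihilates f (take i s) -> annihilates g (take m s) ->
  window s g (m.+1 - (size g).-1) != 0 ->
  (linear_complexity (take i.+1 s) <= maxn (size f).-1 ((size g).-1 + (i - m)))%N.
Proof.
move=> /andP[lt_mi lt_is] f_neq0 g_neq0 f_ann g_ann dg_neq0.
have lt_ms := ltn_trans lt_mi lt_is.
move/annihilates_takeE: f_ann => /(_ f_neq0 (ltnW lt_is)) f_ann.
move/annihilates_takeE: g_ann => /(_ g_neq0 (ltnW lt_ms)) g_ann.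
have size_f : size f = (size f).-1.+1 by rewrite prednK ?size_poly_gt0.
have size_g : size g = (size g).-1.+1 by rewrite prednK ?size_poly_gt0.
set a := (size f).-1 in f_ann size_f *; set b := (size g).-1 in g_ann dg_neq0 size_g *.
set d := maxn a (b + (i - m)).
set df := window s f (i.+1 - a); set dg := window s g (m.+1 - b).
pose h := dg *: (f * 'X^(d - a)) - df *: (g * 'X^(d - b - (i - m))).
have size_h : size h = d.+1.
  have size_hf : size (dg *: (f * 'X^(d - a))) = d.+1.
    by rewrite size_scale // size_mulXn // size_f; lia.
  rewrite size_polyDl size_hf // size_polyN (leq_ltn_trans (size_scale_leq _ _)) //.
  by rewrite size_mulXn // size_g; lia.
have h_neq0 : h != 0 by rewrite -size_poly_gt0 size_h.
apply: leq_trans (linear_complexity_min h_neq0 _) _; last by rewrite size_h.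
apply/annihilates_takeE => //; rewrite size_h /= => j /andP[lt_dj le_ji].
rewrite window_lin !window_mulXn.
have -> : (j - d + (d - a) = j - a)%N by lia.
have -> : (j - d + (d - b - (i - m)) = (j - (i - m)) - b)%N by lia.
move: le_ji; rewrite leq_eqVlt => /predU1P[-> | lt_ji].
  have -> : (i.+1 - (i - m) = m.+1)%N by lia.
  by rewrite mulrC subrr.
rewrite f_ann ?g_ann ?mulr0 ?subr0 //; lia.
Qed.

Lemma linear_complexity_jump s (i : nat) : (i < size s)%N ->
  (linear_complexity (take i s) < linear_complexity (take i.+1 s))%N ->
  (linear_complexity (take i s) + linear_complexity (take i.+1 s) <= i.+1)%N.
Proof.
elim/ltn_ind: i => i IH lt_is jump_i.
have le_Li1 := linear_complexity_le_size (take i.+1 s); rewrite size_takel // in le_Li1.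
have [-> | L_i_gt0] := posnP (linear_complexity (take i s)); first by rewrite add0n.
have [m lt_mi [jump_m L_m1]] : exists2 m, (m < i)%N &
    (linear_complexity (take m s) < linear_complexity (take m.+1 s))%N /\
    linear_complexity (take m.+1 s) = linear_complexity (take i s).
  apply: last_increase; last by rewrite linear_complexity_take0.
  by move=> k lt_ki; apply: linear_complexity_take_mono (ltn_trans lt_ki lt_is).
have lt_ms := ltn_trans lt_mi lt_is.
have IHm := IH m lt_mi lt_ms jump_m.
have [f f_neq0 [deg_f f_ann]] := linear_complexity_spec (take i s).
have [g g_neq0 [deg_g g_ann]] := linear_complexity_spec (take m s).
have dg_neq0 := window_neq0_of_jump lt_ms g_neq0 g_ann deg_g jump_m.
have := linear_complexity_take_succ_le (m := m) _ f_neq0 g_neq0 f_ann g_ann dg_neq0.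
by rewrite deg_f deg_g lt_mi lt_is => /(_ isT); lia.
Qed.

End LinearComplexity.

Theorem mainTheorem11 (D : idomainType) (n : nat) (s : seq D) :
  (1 <= n)%N -> size s = n ->
  (\sum_(1 <= i < n.+1) linear_complexity (take i s) <=
   \sum_(1 <= i < n.+1) i.+1./2)%N.
Proof.
move=> _ size_s; apply: sum_le_sum_half => [|k lt_kn|k lt_kn].
- exact: linear_complexity_take0.
- by apply: linear_complexity_take_mono; rewrite size_s.
- by apply: linear_complexity_jump; rewrite size_s.
Qed.
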